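(* Let $(\Omega,\mathcal{F},P,T)$ be an ergodic measure preserving system with $(\Omega,\mathcal{F})$ a standard measurable space. The following are equivalent: (i) there exists $B\in\mathcal{F}$ with $P(B)>0$ such that for every $C\in\mathcal{F}$ with $C\subset B$, $\lim_{n\to\infty}\frac{1}{n}\sum_{i=0}^{n-1}P^{1/2}(B\cap T^{-i}C)=P^{1/2}(B)P(C)$; (ii) $P$ is periodic, i.e. there exist $r\in\mathbb{N}$ and distinct points $\omega_1,\dots,\omega_r\in\Omega$ with $P(\{\omega_i\})=\frac{1}{r}$ for $i=1,\dots,r$. In this case (with $B$ as in (i)), $r=\frac{1}{P(B)}\in\mathbb{N}$.
   Context: A measure preserving system is a probability space $(\Omega,\mathcal{F},P)$ with measurable $T:\Omega\to\Omega$ and $P(T^{-1}A)=P(A)$ for all $A$; it is ergodic if $P(A)\in\{0,1\}$ whenever $T^{-1}A=A$. A measurable space is standard if isomorphic to a complete separable metric space with its Borel $\sigma$-algebra. $P^{1/2}(A)=(P(A))^{1/2}$. *)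

From HB Require Import structures.
From mathcomp Require Import all_boot all_order all_algebra.
From mathcomp Require Import all_classical all_reals all_analysis.
Set Implicit Arguments. Unset Strict Implicit. Unset Printing Implicit Defensive.
Import Order.TTheory GRing.Theory Num.Theory.
Import numFieldNormedType.Exports.
Local Open Scope classical_set_scope.
Local Open Scope ring_scope.

Definition metric_open (R : realType) (X : Type) (dist : X -> X -> R) (U : set X) :=
  forall x, U x -> exists e : R, 0 < e /\ forall y, dist x y < e -> U y.

Definition is_metric (R : realType) (X : Type) (dist : X -> X -> R) :=
  (forall x y, 0 <= dist x y) /\ (forall x y, dist x y = 0 <-> x = y) /\
  (forall x y, dist x y = dist y x) /\
  (forall x y z, dist x z <= dist x y + dist y z).

Definition metric_complete (R : realType) (X : Type) (dist : X -> X -> R) :=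
  forall u : nat -> X,
    (forall e : R, 0 < e -> exists N, forall m n, (N <= m)%N -> (N <= n)%N -> dist (u m) (u n) < e) ->
    exists l, forall e : R, 0 < e -> exists N, forall n, (N <= n)%N -> dist (u n) l < e.

Definition metric_separable (R : realType) (X : Type) (dist : X -> X -> R) :=
  exists s : nat -> X, forall x (e : R), 0 < e -> exists n, dist x (s n) < e.

Definition standard_space (R : realType) (d : measure_display) (Om : measurableType d) :=
  exists (X : Type) (dist : X -> X -> R) (f : Om -> X) (g : X -> Om),
    [/\ is_metric dist, metric_complete dist, metric_separable dist,
        cancel f g /\ cancel g f &
        forall A : set Om, measurable A <-> <<s metric_open dist >> (f @` A)].

Definition measure_preserving (R : realType) (d : measure_display) (Om : measurableType d)
  (P : probability Om R) (T : Om -> Om) :=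
  measurable_fun setT T /\ forall A : set Om, measurable A -> P (T @^-1` A) = P A.

Definition ergodic (R : realType) (d : measure_display) (Om : measurableType d)
  (P : probability Om R) (T : Om -> Om) :=
  forall A : set Om, measurable A -> T @^-1` A = A -> P A = 0%E \/ P A = 1%E.

Definition cesaro_sqrt_property (R : realType) (d : measure_display) (Om : measurableType d)
  (P : probability Om R) (T : Om -> Om) (B : set Om) :=
  [/\ measurable B, (0 < P B)%E &
    forall C : set Om, measurable C -> C `<=` B ->
      (fun n : nat => (n%:R^-1 : R) * \sum_(i < n) Num.sqrt (fine (P (B `&` (iter i T) @^-1` C))))
        @ \oo --> (Num.sqrt (fine (P B)) * fine (P C) : R)].

Definition periodic_with (R : realType) (d : measure_display) (Om : measurableType d)
  (P : probability Om R) (r : nat) (w : 'I_r -> Om) :=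
  [/\ (0 < r)%N, injective w & forall i, P [set w i] = (r%:R^-1)%:E].

From HB Require Import structures.
From mathcomp Require Import all_boot all_order all_algebra.
From mathcomp Require Import all_classical all_reals all_analysis.
From mathcomp Require Import ring lra zify.
Set Implicit Arguments. Unset Strict Implicit. Unset Printing Implicit Defensive.
Import Order.TTheory GRing.Theory Num.Theory.
Import numFieldNormedType.Exports.
Local Open Scope classical_set_scope.
Local Open Scope ring_scope.

(* An atom x of P, i.e. a point of positive mass, has a forward orbit of full
   measure by ergodicity; hence x is periodic, of exact period s say, and P is
   uniform on the s points of its cycle.  This gives (ii), and conversely
   B = {x} satisfies (i) since the returns P({x} `&` T^-i C) are s-periodic.
   If B satisfies (i) and p = P(B), an atom exists: otherwise, the space being
   standard, B splits into finitely many pieces C_j of mass at most p^3/2, and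
   P(B `&` T^-i B) <= sum_j P(B `&` T^-i C_j)
                  <= (p^3/2)^(1/2) sum_j P^(1/2)(B `&` T^-i C_j);
   averaging over i, with Jensen's inequality on the left and (i) for B and
   for each C_j, gives p^3 <= p^3/2.  Finally, for an atom x in B the returns
   P(B `&` T^-i {x}) are s-periodic with period sum P(B), so (i) for C = {x}
   gives P(B) P{x} <= P^(1/2)(B) P^(1/2){x} P{x}, i.e. P(B) <= P{x}; and all
   atoms have the same mass 1/r. *)

Lemma cesaro_periodic (R : realType) (u : R^nat) s : (0 < s)%N ->
  (forall i, u (s + i)%N = u i) ->
  (fun n : nat => n%:R^-1 * \sum_(i < n) u i) @ \oo --> (\sum_(i < s) u i) / s%:R.
Proof.
move=> s_gt0 u_per; set L := (\sum_(i < s) u i) / s%:R.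
have s_neq0 : s%:R != 0 :> R by rewrite pnatr_eq0 -lt0n.
pose v n := \sum_(i < n) u i - n%:R * L.
have v_per n : v (s + n)%N = v n.
  rewrite /v big_split_ord /= (eq_bigr (fun i : 'I_n => u i)); last first.
    by move=> i _; rewrite u_per.
  by rewrite natrD mulrDl /L mulrCA mulfV // mulr1; ring.
pose M := \sum_(i < s) `|v i|.
have v_bounded n : `|v n| <= M.
  elim/ltn_ind: n => n IH; have [ns|sn] := ltnP n s.
    by rewrite /M (bigD1 (Ordinal ns)) //= lerDl sumr_ge0.
  by rewrite -(subnKC sn) v_per IH // ltn_subrL s_gt0 (leq_trans s_gt0 sn).
apply/cvgrPdist_le => e e_gt0; near=> n.
have n_gt0 : (0 : R) < n%:R by rewrite ltr0n; near: n; exact: nbhs_infty_gt.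
have -> : L - n%:R^-1 * \sum_(i < n) u i = - (v n / n%:R).
  by rewrite /v; field; rewrite gt_eqF.
rewrite normrN normrM normfV (gtr0_norm n_gt0) ler_pdivrMr // (le_trans (v_bounded n)) //.
by rewrite mulrC -ler_pdivrMr //; near: n; exact: nbhs_infty_ger.
Unshelve. all: end_near. Qed.

Lemma sqr_mean_le_mean_sqr (R : realFieldType) (x : nat -> R) n :
  (n%:R^-1 * \sum_(i < n) x i) ^+ 2 <= n%:R^-1 * \sum_(i < n) x i ^+ 2.
Proof.
case: n => [|n]; first by rewrite !big_ord0 !mulr0 expr0n.
set N : R := n.+1%:R; have N_gt0 : 0 < N by rewrite ltr0n.
set m := N^-1 * \sum_(i < n.+1) x i.
have sum_x : \sum_(i < n.+1) x i = N * m by rewrite /m mulrA mulfV ?gt_eqF // mul1r.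
have : 0 <= \sum_(i < n.+1) (x i - m) ^+ 2 by apply: sumr_ge0 => i _; exact: sqr_ge0.
have -> : \sum_(i < n.+1) (x i - m) ^+ 2 = \sum_(i < n.+1) x i ^+ 2 - N * m ^+ 2.
  rewrite (eq_bigr (fun i : 'I_n.+1 => x i ^+ 2 + (- (2 * m) * x i + m ^+ 2)));
    last by move=> i _; ring.
  rewrite big_split big_split /= -mulr_sumr sumr_const card_ord sum_x -mulr_natr -/N.
  ring.
by rewrite subr_ge0 -ler_pdivlMl // mulrC.
Qed.

Lemma le_sqrt_mul_sqrt (R : rcfType) (a b : R) : 0 <= a -> a <= b ->
  a <= Num.sqrt b * Num.sqrt a.
Proof.
move=> a_ge0 ab; apply: (@le_trans _ _ (Num.sqrt a * Num.sqrt a)).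
  by rewrite -expr2 sqr_sqrtr.
by apply: ler_wpM2r; rewrite ?sqrtr_ge0 // ler_sqrt // (le_trans a_ge0 ab).
Qed.

Lemma cvg_sum (R : realType) (I : Type) (r : seq I) (T : Type) (F : set_system T)
    (u : I -> T -> R) (l : I -> R) : Filter F ->
  (forall i, u i @ F --> l i) -> (fun t => \sum_(i <- r) u i t) @ F --> \sum_(i <- r) l i.
Proof. by move=> FF ul; exact: (@cvg_big R _ +%R 0 xpredT add_continuous _ _ _ _ _ FF). Qed.

Section probability_fine.
Context (R : realType) d (Om : measurableType d) (P : probability Om R).
Implicit Types A B W : set Om.

Definition pr A : R := fine (P A).

Lemma prE A : measurable A -> P A = (pr A)%:E.
Proof. by move=> mA; rewrite fineK // fin_num_measure. Qed.

Lemma pr_gt0 A : measurable A -> (0 < P A)%E -> 0 < pr A.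
Proof. by move=> mA; rewrite prE // lte_fin. Qed.

Lemma pr_ge0 A : 0 <= pr A.
Proof. by rewrite fine_ge0 // measure_ge0. Qed.

Lemma le_pr A B : measurable A -> measurable B -> A `<=` B -> pr A <= pr B.
Proof. by move=> mA mB AB; rewrite -lee_fin -!prE // le_measure // inE. Qed.

Lemma pr_set0 : pr set0 = 0.
Proof. by rewrite /pr measure0. Qed.

Lemma pr_bigsetU n (F : nat -> set Om) : (forall k, measurable (F k)) ->
  trivIset `I_n F -> pr (\big[setU/set0]_(k < n) F k) = \sum_(k < n) pr (F k).
Proof.
move=> mF tF; apply: EFin_inj; rewrite -sumEFin -prE; last exact: bigsetU_measurable.
rewrite measure_semi_additive_ord_I //; last exact: bigsetU_measurable.
by apply: eq_bigr => k _; exact: prE.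
Qed.

Lemma pr_bigsetU_le n (F : nat -> set Om) : (forall k, measurable (F k)) ->
  pr (\big[setU/set0]_(k < n) F k) <= \sum_(k < n) pr (F k).
Proof.
move=> mF; rewrite -lee_fin -sumEFin -prE; last exact: bigsetU_measurable.
rewrite (eq_bigr (fun k : 'I_n => P (F k))); last by move=> k _; rewrite prE.
exact: Boole_inequality.
Qed.

Lemma pr_eq_on_full A B W : measurable A -> measurable B -> measurable W ->
  pr W = 1 -> A `&` W = B `&` W -> pr A = pr B.
Proof.
move=> mA mB mW W1 ABW.
have null_outside C : measurable C -> pr (C `\` W) = 0.
  move=> mC; apply/eqP; rewrite eq_le pr_ge0 andbT.
  have : pr (~` W) = 0.
    by rewrite /pr probability_setC // prE // W1 subee.
  move=> <-; apply: le_pr; first exact: measurableD.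
    exact: measurableC.
  by move=> z [].
have splitW C : measurable C -> pr C = pr (C `&` W).
  move=> mC; have : P C = (P (C `\` W) + P (C `&` W))%E := measureDI P mC mW.
  rewrite !prE ?null_outside ?add0r //; [exact: EFin_inj|exact: measurableI|exact: measurableD].
by rewrite splitW // [RHS]splitW // ABW.
Qed.

Lemma pr_nonincreasing_cvg (F : nat -> set Om) : (forall k, measurable (F k)) ->
  nonincreasing_seq F -> (fun k => pr (F k)) @ \oo --> pr (\bigcap_k F k).
Proof.
move=> mF dF; have mI := bigcapT_measurable mF.
apply: fine_cvg; rewrite -prE //.
apply: nonincreasing_cvg_mu => //.
exact: le_lt_trans (probability_le1 P (mF 0%N)) (ltry 1).
Qed.

Lemma pr_nondecreasing_cvg (F : nat -> set Om) : (forall k, measurable (F k)) ->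
  nondecreasing_seq F -> (fun k => pr (F k)) @ \oo --> pr (\bigcup_k F k).
Proof.
move=> mF dF; have mU := bigcupT_measurable _ mF.
by apply: fine_cvg; rewrite -prE //; apply: nondecreasing_cvg_mu.
Qed.

Lemma pr_full_meets A W : measurable A -> measurable W -> pr W = 1 -> 0 < pr A ->
  exists2 y, A y & W y.
Proof.
move=> mA mW W1 A_gt0; apply: contrapT => AW0.
have AW_empty : A `&` W = set0 by apply/seteqP; split=> // y [Ay Wy]; apply: AW0; exists y.
have := pr_eq_on_full mA (measurableI _ _ mA mW) mW W1.
by rewrite AW_empty set0I pr_set0 => /(_ erefl) A0; rewrite A0 ltxx in A_gt0.
Qed.

Lemma periodic_with_atom_mass r (w : 'I_r -> Om) : periodic_with P w ->
  exists2 x, 0 < pr [set x] & pr [set x] = r%:R^-1.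
Proof.
by case=> r_gt0 _ Pw; exists (w (Ordinal r_gt0)); rewrite /pr Pw /= ?invr_gt0 ?ltr0n.
Qed.

Lemma finite_partition_of_cover B (G : nat -> set Om) (del : R) :
  measurable B -> 0 < del -> (forall m, measurable (G m)) -> (forall m, pr (G m) <= del) ->
  (forall z, exists m, G m z) ->
  exists N (C : nat -> set Om), [/\ forall j, measurable (C j), forall j, C j `<=` B,
    trivIset setT C, B `<=` \big[setU/set0]_(j < N) C j & forall j, pr (C j) <= del].
Proof.
move=> mB del_gt0 mG G_le G_cover.
pose D n := B `\` \big[setU/set0]_(m < n) G m.
have mD n : measurable (D n) by apply: measurableD => //; exact: bigsetU_measurable.
have D_decr : nonincreasing_seq D.
  apply/nonincreasing_seqP => n; apply/subsetPset => z [Bz nGz]; split=> // Gz.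
  by apply: nGz; rewrite big_ord_recr /=; left.
have D_empty : \bigcap_n D n = set0.
  apply/seteqP; split=> // z Dz; have [m Gmz] := G_cover z.
  by have [_] := Dz m.+1 I; apply; rewrite big_ord_recr /=; right.
have := pr_nonincreasing_cvg mD D_decr; rewrite D_empty pr_set0.
move=> /cvgr_lt /(_ del del_gt0) [N _ /(_ N (leqnn N)) DN_small].
(* Padding the cover with setT makes the N-th disjointified piece equal to D N. *)
pose G' k := if (k < N)%N then G k else setT.
have mG' k : measurable (G' k) by rewrite /G'; case: ifP.
exists N.+1, (fun j => B `&` seqDU G' j); split.
- by move=> j; apply: measurableI => //; exact: seqDU_measurable.
- by move=> j z [].
- exact: trivIset_setIl.
- move=> z Bz; rewrite -big_distrr /= -bigsetU_seqDU; split=> //.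
  by rewrite big_ord_recr /= /G' ltnn; right.
move=> j; have mC : measurable (B `&` seqDU G' j).
  by apply: measurableI => //; exact: seqDU_measurable.
have [jN|Nj] := ltnP j N.
  apply: le_trans (G_le j); apply: le_pr; [exact: mC|exact: mG|].
  by move=> z [_ [+ _]]; rewrite /G' jN.
apply: le_trans (ltW DN_small); apply: le_pr; [exact: mC|exact: mD|].
move=> z [Bz [_ nG'z]]; split=> // Gz; apply: nG'z; move: Gz.
rewrite -(bigcup_mkord N G) -(bigcup_mkord j G') => -[m /= mN Gmz].
by exists m; [exact: leq_trans mN Nj|rewrite /G' mN].
Qed.

End probability_fine.

Section measure_preserving.
Context (R : realType) d (Om : measurableType d) (P : probability Om R) (T : Om -> Om).
Hypothesis mpT : measure_preserving P T.

Lemma measurable_preimage_iter i A : measurable A -> measurable (iter i T @^-1` A).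
Proof.
elim: i A => [//|i IH] A mA; apply: (IH (T @^-1` A)).
by rewrite -[T @^-1` A]setTI; exact: mpT.1.
Qed.

Lemma measurable_setI_preimage_iter i A B : measurable A -> measurable B ->
  measurable (A `&` iter i T @^-1` B).
Proof. by move=> mA mB; apply: measurableI => //; exact: measurable_preimage_iter. Qed.

Lemma pr_preimage_iter i A : measurable A -> pr P (iter i T @^-1` A) = pr P A.
Proof.
elim: i A => [//|i IH] A mA; transitivity (pr P (T @^-1` A)).
  exact: (IH _ (measurable_preimage_iter 1 mA)).
by rewrite /pr mpT.2.
Qed.

Lemma cesaro_sqrt_partition_bound B N (C : nat -> set Om) (del : R) :
  cesaro_sqrt_property P T B -> (forall j, measurable (C j)) -> (forall j, C j `<=` B) ->
  trivIset setT C -> B `<=` \big[setU/set0]_(j < N) C j ->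
  (forall j, pr P (C j) <= del) -> pr P B ^+ 3 <= del.
Proof.
case=> mB B_gt0 B_cvg mC CB tC BC C_le.
set p := pr P B; have p_gt0 : 0 < p := pr_gt0 mB B_gt0.
have del_ge0 : 0 <= del := le_trans (pr_ge0 _ _) (C_le 0%N).
pose a j i := pr P (B `&` iter i T @^-1` C j).
have mI i A : measurable A -> measurable (B `&` iter i T @^-1` A).
  exact: measurable_setI_preimage_iter.
have return_le i :
    pr P (B `&` iter i T @^-1` B) <= Num.sqrt del * \sum_(j < N) Num.sqrt (a j i).
  apply: (@le_trans _ _ (\sum_(j < N) a j i)).
    apply: le_trans (pr_bigsetU_le P N (fun j => mI i _ (mC j))).
    apply: le_pr; [exact: mI|by apply: bigsetU_measurable => j _; exact: mI|].
    move=> y [By /BC]; rewrite -(bigcup_mkord N C).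
    by rewrite -(bigcup_mkord N (fun j => B `&` iter i T @^-1` C j)) => -[j jN Cj]; exists j.
  rewrite mulr_sumr; apply: ler_sum => j _; apply: le_sqrt_mul_sqrt; first exact: pr_ge0.
  apply: le_trans (C_le j); rewrite -(pr_preimage_iter i (mC j)).
  by apply: le_pr; [exact: mI|exact: measurable_preimage_iter|move=> y []].
have sum_C : \sum_(j < N) pr P (C j) = p.
  rewrite -pr_bigsetU //; last exact: sub_trivIset tC.
  by congr pr; apply/seteqP; split=> // y; rewrite -(bigcup_mkord N C) => -[j _ /CB].
have avg_a : (fun n : nat => n%:R^-1 * \sum_(i < n) \sum_(j < N) Num.sqrt (a j i))
    @ \oo --> Num.sqrt p * p.
  rewrite -{2}sum_C mulr_sumr.
  under eq_fun do rewrite exchange_big mulr_sumr.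
  by apply: cvg_sum => j; exact: B_cvg.
set q := Num.sqrt p * p; have q_gt0 : 0 < q by rewrite mulr_gt0 // sqrtr_gt0.
have : q ^+ 2 <= Num.sqrt del * q.
  have avg_B := B_cvg B mB (@subset_refl _ B).
  rewrite expr2; apply: (ler_cvg_to (cvgM avg_B avg_B) (cvgM (cvg_cst _) avg_a)).
  near=> n => /=; rewrite -expr2.
  pose c i := Num.sqrt (pr P (B `&` iter i T @^-1` B)).
  apply: le_trans (sqr_mean_le_mean_sqr c n) _.
  rewrite mulrCA ler_wpM2l ?invr_ge0 // mulr_sumr; apply: ler_sum => i _.
  by rewrite /c sqr_sqrtr ?pr_ge0.
rewrite expr2 ler_pM2r // => q_le.
have <- : q ^+ 2 = p ^+ 3 by rewrite exprMn sqr_sqrtr ?(ltW p_gt0) // -exprS.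
by rewrite -(sqr_sqrtr del_ge0) lerXn2r // nnegrE ?(ltW q_gt0) ?sqrtr_ge0.
Unshelve. all: end_near. Qed.

End measure_preserving.

Definition forward_orbit (U : Type) (T : U -> U) (x : U) : set U :=
  range (fun i => iter i T x).

Definition exact_period (U : Type) (T : U -> U) (x : U) (s : nat) :=
  [/\ (0 < s)%N, iter s T x = x &
      forall i j, (i < s)%N -> (j < s)%N -> iter i T x = iter j T x -> i = j].

Section periodic_points.
Context (U : Type) (T : U -> U) (x : U).

Lemma iter_mul_period s k : iter s T x = x -> iter (k * s) T x = x.
Proof. by move=> Tsx; elim: k => [//|k IH]; rewrite mulSn iterD IH Tsx. Qed.

Lemma iter_modn s i : iter s T x = x -> iter i T x = iter (i %% s) T x.
Proof. by move=> Tsx; rewrite {1}(divn_eq i s) addnC iterD iter_mul_period. Qed.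

Lemma iter_period_forward_orbit s y : iter s T x = x -> forward_orbit T x y ->
  iter s T y = y.
Proof. by move=> Tsx [k _ <-]; rewrite -iterD addnC iterD Tsx. Qed.

Lemma exists_exact_period m : iter m.+1 T x = x -> exists s, exact_period T x s.
Proof.
move=> Tmx.
have : exists k, (0 < k)%N && `[< iter k T x = x >] by exists m.+1; rewrite asboolT.
case/ex_minnP => s /andP[s_gt0 /asboolP Tsx] s_min.
have no_return k : (0 < k < s)%N -> iter k T x <> x.
  case/andP=> k_gt0 ks Tkx.
  by have := s_min k; rewrite k_gt0 (asboolT Tkx) leqNgt ks => /(_ isT).
have lt_neq i j : (i < j < s)%N -> iter i T x <> iter j T x.
  case/andP=> ij js Tij; apply: (no_return (s - j + i)%N); first by lia.
  by rewrite iterD Tij -iterD subnK ?Tsx // ltnW.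
exists s; split=> // i j i_lt j_lt Tij.
case: (ltngtP i j) => // [ij|ji]; exfalso.
  by apply: (lt_neq i j _ Tij); rewrite ij.
by apply: (lt_neq j i _ (esym Tij)); rewrite ji.
Qed.

End periodic_points.

Section ergodic_atoms.
Context (R : realType) d (Om : measurableType d) (P : probability Om R) (T : Om -> Om).
Hypotheses (mpT : measure_preserving P T) (ergT : ergodic P T)
  (mset1 : forall z : Om, measurable [set z]).

Lemma measurable_forward_orbit x : measurable (forward_orbit T x).
Proof.
have -> : forward_orbit T x = \bigcup_i [set iter i T x].
  by apply/seteqP; split=> [y [i _ <-]|y [i _ ->]]; exists i.
exact: bigcupT_measurable.
Qed.

Lemma pr_set1_iter_le x i j : (i <= j)%N ->
  pr P [set iter i T x] <= pr P [set iter j T x].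
Proof.
move=> ij; rewrite -(subnK ij); elim: (j - i)%N => [//|k IH]; apply: le_trans IH _.
set y := iter (k + i) T x; rewrite addSn /= -/y.
have <- := pr_preimage_iter mpT 1%N (mset1 (T y)).
by apply: le_pr; [exact: mset1|exact: (measurable_preimage_iter mpT)|move=> z ->].
Qed.

Lemma pr_forward_orbit x : 0 < pr P [set x] -> pr P (forward_orbit T x) = 1.
Proof.
move=> x_atom; set O := forward_orbit T x.
have mO := measurable_forward_orbit x.
pose F n := iter n T @^-1` O.
have mF n : measurable (F n) by exact: (measurable_preimage_iter mpT).
have TO y : O y -> O (T y) by case=> i _ <-; exists i.+1.
have F_incr : nondecreasing_seq F.
  by apply/nondecreasing_seqP => n; apply/subsetPset => y /TO; rewrite /F /= -iterS.
have T_inv : T @^-1` (\bigcup_n F n) = \bigcup_n F n.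
  apply/seteqP; split=> y [n _]; rewrite /F /preimage /=.
    by rewrite -iterSr => Fy; exists n.+1.
  by move=> /TO; rewrite -iterS iterSr => Fy; exists n.
have mU : measurable (\bigcup_n F n) by exact: bigcupT_measurable.
have U1 : pr P (\bigcup_n F n) = 1.
  case: (ergT mU T_inv) => [U0|]; last by rewrite /pr => ->.
  have : pr P [set x] <= pr P (\bigcup_n F n).
    by apply: le_pr => // y ->; exists 0%N => //; exists 0%N.
  by rewrite /pr U0 => /(lt_le_trans x_atom); rewrite ltxx.
have := pr_nondecreasing_cvg (P:=P) mF F_incr.
under eq_fun do rewrite /F (pr_preimage_iter mpT _ mO).
by rewrite U1 => h; apply: (cvg_unique _ (cvg_cst _) h).
Qed.

Lemma atom_exact_period x : 0 < pr P [set x] -> exists s, exact_period T x s.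
Proof.
move=> x_atom; have Tx_atom : 0 < pr P [set T x].
  exact: lt_le_trans x_atom (pr_set1_iter_le x (leq0n 1%N)).
have [_ -> [m _ Tmx]] := pr_full_meets (mset1 x) (measurable_forward_orbit (T x))
  (pr_forward_orbit Tx_atom) x_atom.
by apply: (@exists_exact_period _ _ _ m); rewrite iterSr.
Qed.

Lemma forward_orbit_atom x y : 0 < pr P [set x] -> 0 < pr P [set y] ->
  forward_orbit T x y.
Proof.
move=> x_atom y_atom.
have [_ -> //] := pr_full_meets (mset1 y) (measurable_forward_orbit x)
  (pr_forward_orbit x_atom) y_atom.
Qed.

Lemma pr_exact_period x s : 0 < pr P [set x] -> exact_period T x s ->
  forall i, pr P [set iter i T x] = s%:R^-1.
Proof.
move=> x_atom [s_gt0 Tsx Tinj].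
have pr_iter i : pr P [set iter i T x] = pr P [set x].
  apply/eqP; rewrite eq_le (pr_set1_iter_le x (leq0n i)) andbT (iter_modn i Tsx).
  by rewrite -[X in _ <= pr P [set X]]Tsx pr_set1_iter_le // ltnW // ltn_mod.
have orbitE : forward_orbit T x = \big[setU/set0]_(j < s) [set iter j T x].
  rewrite -(bigcup_mkord s (fun j => [set iter j T x])).
  apply/seteqP; split=> [y [i _ <-]|y [j /= js ->]].
    by exists (i %% s)%N; rewrite /= ?ltn_mod // -iter_modn.
  by exists j.
have : pr P (forward_orbit T x) = s%:R * pr P [set x].
  rewrite orbitE (pr_bigsetU P (F := fun j => [set iter j T x])) //; last first.
    apply/trivIsetP => i j i_lt j_lt ij; apply/seteqP.
    split=> // y [-> /(Tinj _ _ i_lt j_lt) eij].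
    by rewrite eij eqxx in ij.
  by rewrite (eq_bigr (fun=> pr P [set x])) ?sumr_const ?card_ord ?mulr_natl // => j _.
rewrite pr_forward_orbit // => s_pr i; rewrite pr_iter.
have s_neq0 : s%:R != 0 :> R by rewrite pnatr_eq0 -lt0n.
by apply: (mulfI s_neq0); rewrite -s_pr mulfV.
Qed.

Lemma exists_atom_in B x : measurable B -> 0 < pr P B -> 0 < pr P [set x] ->
  exists2 y, B y & 0 < pr P [set y].
Proof.
move=> mB B_gt0 x_atom.
have [y By [j _ jy]] := pr_full_meets mB (measurable_forward_orbit x)
  (pr_forward_orbit x_atom) B_gt0.
by exists y; rewrite // -jy; exact: lt_le_trans x_atom (pr_set1_iter_le x (leq0n j)).
Qed.

Lemma pr_atom_eq x y : 0 < pr P [set x] -> 0 < pr P [set y] ->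
  pr P [set x] = pr P [set y].
Proof.
move=> x_atom y_atom; have [s xs] := atom_exact_period x_atom.
have [k _ <-] := forward_orbit_atom x_atom y_atom.
by rewrite (pr_exact_period x_atom xs k) -(pr_exact_period x_atom xs 0).
Qed.

Lemma periodic_with_atom x s : 0 < pr P [set x] -> exact_period T x s ->
  periodic_with P (fun i : 'I_s => iter i T x).
Proof.
move=> x_atom xs; have [s_gt0 _ Tinj] := xs.
split=> // [i j /(Tinj _ _ (ltn_ord i) (ltn_ord j)) /val_inj //|i].
by rewrite prE // (pr_exact_period x_atom xs).
Qed.

Section atom_cycle.
Variables (x : Om) (s : nat).
Hypotheses (x_atom : 0 < pr P [set x]) (xs : exact_period T x s).

Lemma pr_setI_preimage_iter_periodic B i : measurable B ->
  pr P (B `&` iter (s + i) T @^-1` [set x]) = pr P (B `&` iter i T @^-1` [set x]).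
Proof.
move=> mB; have [_ Tsx _] := xs.
have iter_s y : forward_orbit T x y -> iter (s + i) T y = iter i T y.
  by move=> Oy; rewrite addnC iterD (iter_period_forward_orbit Tsx Oy).
apply: (pr_eq_on_full _ _ (measurable_forward_orbit x) (pr_forward_orbit x_atom)).
- exact: (measurable_setI_preimage_iter mpT).
- exact: (measurable_setI_preimage_iter mpT).
by apply/seteqP; split=> y [[By Txy] Oy]; split=> //; split=> //=;
  move: Txy; rewrite /= iter_s.
Qed.

Lemma sum_pr_setI_preimage_iter B : measurable B ->
  \sum_(i < s) pr P (B `&` iter i T @^-1` [set x]) = pr P B.
Proof.
move=> mB; have [s_gt0 Tsx Tinj] := xs.
pose F i := B `&` iter i T @^-1` [set x].
have mF i : measurable (F i) by exact: (measurable_setI_preimage_iter mpT).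
have no_second_return i j y : (i < j < s)%N -> iter i T y = x -> iter j T y <> x.
  case/andP=> ij js Tiy Tjy.
  have E : iter (j - i) T x = iter 0 T x by rewrite /= -{1}Tiy -iterD subnK // ltnW.
  by have := Tinj _ _ (leq_ltn_trans (leq_subr i j) js) s_gt0 E; lia.
have tF : trivIset `I_s F.
  apply/trivIsetP => i j /= i_lt j_lt ij; apply/seteqP; split=> // y [[_ Tiy] [_ Tjy]].
  case: (ltngtP i j) ij => [lt|lt|]; rewrite ?eqxx // => _.
    by apply: (no_second_return i j y) => //; rewrite lt.
  by apply: (no_second_return j i y) => //; rewrite lt.
rewrite -(pr_bigsetU P (F := F)) // -big_distrr /=.
apply: (pr_eq_on_full _ mB (measurable_forward_orbit x) (pr_forward_orbit x_atom)).
  apply: measurableI => //; apply: bigsetU_measurable => i _.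
  exact: (measurable_preimage_iter mpT).
apply/seteqP; split=> [y [[By _] Oy] //|y [By Oy]]; split=> //; split=> //.
have [k _ ky] := Oy.
rewrite -(bigcup_mkord s (fun i => iter i T @^-1` [set x])).
(* y = T^k x, so T^((s-1)k) y = T^(sk) x = x. *)
exists ((s.-1 * k) %% s)%N; first by rewrite /= ltn_mod.
rewrite /= -iter_modn ?(iter_period_forward_orbit Tsx Oy) // -ky -iterD.
by rewrite -mulSnr prednK // mulnC iter_mul_period.
Qed.

End atom_cycle.

Lemma cesaro_sqrt_atom B x : cesaro_sqrt_property P T B -> B x -> 0 < pr P [set x] ->
  pr P B = pr P [set x].
Proof.
case=> mB B_gt0 B_cvg Bx x_atom; have [s xs] := atom_exact_period x_atom.
have s_gt0 : (0 < s)%N by case: xs.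
set p := pr P B; set q := pr P [set x]; have q_gt0 : 0 < q := x_atom.
have q_s : q = s%:R^-1 := pr_exact_period x_atom xs 0.
have sqrt_p_gt0 : 0 < Num.sqrt p by rewrite sqrtr_gt0 (pr_gt0 mB B_gt0).
pose u i := pr P (B `&` iter i T @^-1` [set x]).
have avg_u : (fun n : nat => n%:R^-1 * \sum_(i < n) u i) @ \oo --> p * q.
  rewrite q_s -[p](sum_pr_setI_preimage_iter x_atom xs mB).
  exact: cesaro_periodic s_gt0 (fun i => pr_setI_preimage_iter_periodic x_atom xs i mB).
have x_in_B : [set x] `<=` B by move=> y ->.
have : p * q <= Num.sqrt q * (Num.sqrt p * q).
  apply: (ler_cvg_to avg_u (cvgM (cvg_cst _) (B_cvg _ (mset1 x) x_in_B))).
  near=> n => /=; rewrite mulrCA ler_wpM2l ?invr_ge0 // mulr_sumr.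
  apply: ler_sum => i _; apply: le_sqrt_mul_sqrt; first exact: pr_ge0.
  rewrite /q -(pr_preimage_iter mpT i (mset1 x)).
  apply: le_pr; [exact: (measurable_setI_preimage_iter mpT)|..|by move=> y []].
  exact: (measurable_preimage_iter mpT).
rewrite mulrA ler_pM2r // -{1}(sqr_sqrtr (pr_ge0 P B : 0 <= p)) expr2 ler_pM2r //.
by rewrite ler_sqrt ?(ltW q_gt0) // => p_le_q; apply/eqP; rewrite eq_le p_le_q le_pr.
Unshelve. all: end_near. Qed.

Lemma cesaro_sqrt_set1 x : 0 < pr P [set x] -> cesaro_sqrt_property P T [set x].
Proof.
move=> x_atom; have [s xs] := atom_exact_period x_atom; have [s_gt0 Tsx Tinj] := xs.
split=> [||C mC Cx]; [exact: mset1|by rewrite prE ?lte_fin|].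
pose v i := Num.sqrt (pr P ([set x] `&` iter i T @^-1` C)).
have v_per i : v (s + i)%N = v i.
  congr (Num.sqrt (pr P _)); apply/seteqP; split=> y [-> Cy]; split=> //;
    by move: Cy; rewrite /= addnC iterD Tsx.
have v_sum : \sum_(i < s) v i = Num.sqrt (pr P C).
  rewrite -(prednK s_gt0) big_ord_recl big1 ?addr0 => [|i _].
    by rewrite /v /= setIidr.
  rewrite /v; have -> : [set x] `&` iter (bump 0 i) T @^-1` C = set0.
    apply/seteqP; split=> // y [-> /Cx Tix].
    have i_lt : (i.+1 < s)%N by rewrite -ltn_predRL.
    by have := Tinj i.+1 0 i_lt s_gt0 Tix.
  by rewrite pr_set0 sqrtr0.
have q_s : pr P [set x] = s%:R^-1 := pr_exact_period x_atom xs 0.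
rewrite -[fine (P [set x])]/(pr P [set x]) -[fine (P C)]/(pr P C).
have -> : Num.sqrt (pr P [set x]) * pr P C = Num.sqrt (pr P C) / s%:R.
  by case: (subset_set1 Cx) => ->; rewrite ?pr_set0 ?sqrtr0 ?mulr0 ?mul0r // {2}q_s.
by rewrite -v_sum; exact: cesaro_periodic s_gt0 v_per.
Qed.

End ergodic_atoms.

Lemma standard_space_embedding (R : realType) d (Om : measurableType d) :
  standard_space R Om -> exists (X : Type) (dist : X -> X -> R) (f : Om -> X),
    [/\ is_metric dist, metric_separable dist, injective f &
        forall c e, measurable (f @^-1` [set y | dist c y < e])].
Proof.
case=> X [dist [f [g [dist_metric _ dist_sep [fK gK] measurableE]]]].
exists X, dist, f; split=> //; first exact: can_inj fK.
move=> c e; apply/measurableE.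
have -> : f @` (f @^-1` [set y | dist c y < e]) = [set y | dist c y < e].
  by apply/seteqP; split=> [_ [z ? <-] //|y ?]; exists (g y); rewrite /= gK.
apply: sub_sigma_algebra => y /= cy; exists (e - dist c y); split; first by rewrite subr_gt0.
have [_ [_ [_ dist_tri]]] := dist_metric.
by move=> y' yy'; apply: le_lt_trans (dist_tri c y y') _; rewrite -ltrBrDl.
Qed.

Section countably_separated.
Context (R : realType) d (Om : measurableType d) (P : probability Om R) (T : Om -> Om)
  (X : Type) (dist : X -> X -> R) (f : Om -> X).
Hypotheses (mpT : measure_preserving P T) (dist_metric : is_metric dist)
  (f_inj : injective f)
  (measurable_ball : forall c e, measurable (f @^-1` [set y | dist c y < e])).

Lemma bigcap_ball_set1 z :
  \bigcap_k f @^-1` [set y | dist (f z) y < k.+1%:R^-1] = [set z].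
Proof.
have [dist_ge0 [dist_eq0 _]] := dist_metric.
apply/seteqP; split=> [w zw|w -> k _]; last by rewrite /= (proj2 (dist_eq0 _ _) erefl) invr_gt0.
apply/esym/f_inj/dist_eq0/eqP; rewrite eq_le dist_ge0 andbT leNgt; apply/negP => d_gt0.
have [k _ /(_ k (leqnn k)) k_lt] := near_infty_natSinv_lt (PosNum d_gt0).
by have := zw k I; rewrite /= ltNge (ltW k_lt).
Qed.

Lemma measurable_set1 (z : Om) : measurable [set z].
Proof. by rewrite -bigcap_ball_set1; exact: bigcapT_measurable. Qed.

Lemma small_ball (no_atom : forall z, P [set z] = 0%E) z (del : R) : 0 < del ->
  exists2 e, 0 < e & pr P (f @^-1` [set y | dist (f z) y < e]) < del.
Proof.
move=> del_gt0.
have decr : nonincreasing_seq (fun k => f @^-1` [set y | dist (f z) y < k.+1%:R^-1]).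
  apply/nonincreasing_seqP => k; apply/subsetPset => w /= /lt_le_trans; apply.
  by rewrite lef_pV2 ?posrE // ler_nat.
have := pr_nonincreasing_cvg (P:=P) (fun k => measurable_ball _ _) decr.
rewrite bigcap_ball_set1 /pr no_atom /=.
move=> /cvgr_lt /(_ del del_gt0) [N _ /(_ N (leqnn N)) small].
by exists N.+1%:R^-1; rewrite ?invr_gt0.
Qed.

Lemma small_cover (dist_sep : metric_separable dist) (no_atom : forall z, P [set z] = 0%E)
    (del : R) : 0 < del ->
  exists G : nat -> set Om, [/\ forall m, measurable (G m), forall m, pr P (G m) <= del &
    forall z, exists m, G m z].
Proof.
move=> del_gt0; have [s s_dense] := dist_sep.
have [_ [_ [dist_sym dist_tri]]] := dist_metric.
pose ball n k := f @^-1` [set y | dist (s n) y < k.+1%:R^-1].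
(* Balls of radius 1/(k+1) around the dense points, enumerated through pickle;
   those of mass above del are dropped. *)
pose G m := if unpickle m is Some (n, k) then
  (if pr P (ball n k) <= del then ball n k else set0) else set0.
exists G; split.
- move=> m; rewrite /G; case: unpickle => [[n k]|] //.
  by case: ifP => // _; exact: measurable_ball.
- move=> m; rewrite /G; case: unpickle => [[n k]|]; last by rewrite pr_set0 ltW.
  by case: ifP => // _; rewrite pr_set0 ltW.
move=> z; have [e e_gt0 ball_small] := small_ball no_atom z del_gt0.
have [k _ /(_ k (leqnn k)) k_lt] := near_infty_natSinv_lt (PosNum (divr_gt0 e_gt0 (ltr0n R 2))).
have [n zn] : exists n, dist (f z) (s n) < k.+1%:R^-1 by apply: s_dense; rewrite invr_gt0.
have ball_sub : ball n k `<=` f @^-1` [set y | dist (f z) y < e].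
  move=> w /= nw; apply: le_lt_trans (dist_tri _ (s n) _) _.
  by rewrite [e]splitr ltrD // (lt_trans _ k_lt).
exists (pickle (n, k)); rewrite /G pickleK ifT; first by rewrite /ball /= dist_sym.
apply/ltW/(le_lt_trans _ ball_small)/le_pr => //; exact: measurable_ball.
Qed.

Lemma cesaro_sqrt_exists_atom (dist_sep : metric_separable dist) B :
  cesaro_sqrt_property P T B -> exists x, 0 < pr P [set x].
Proof.
move=> B_prop; have [mB B_gt0 _] := B_prop; apply: contrapT => no_atom.
have P_set1 z : P [set z] = 0%E.
  rewrite (prE P (measurable_set1 z)); congr EFin; apply/eqP; rewrite eq_le pr_ge0 andbT leNgt.
  by apply/negP => z_atom; apply: no_atom; exists z.
have p_gt0 := pr_gt0 mB B_gt0.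
have del_gt0 : 0 < pr P B ^+ 3 / 2 by rewrite divr_gt0 // exprn_gt0.
have [G [mG G_le G_cover]] := small_cover dist_sep P_set1 del_gt0.
have [N [C [mC CB tC BC C_le]]] := finite_partition_of_cover mB del_gt0 mG G_le G_cover.
have := cesaro_sqrt_partition_bound mpT B_prop mC CB tC BC C_le.
have := exprn_gt0 3 p_gt0; lra.
Qed.

End countably_separated.

Theorem proposition6p4 (R : realType) (d : measure_display) (Om : measurableType d)
  (P : probability Om R) (T : Om -> Om) :
  standard_space R Om -> measure_preserving P T -> ergodic P T ->
  ((exists B : set Om, cesaro_sqrt_property P T B) <->
   (exists (r : nat) (w : 'I_r -> Om), periodic_with P w)) /\
  (forall (B : set Om) (r : nat) (w : 'I_r -> Om),
     cesaro_sqrt_property P T B -> periodic_with P w -> P B = (r%:R^-1)%:E).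
Proof.
move=> /standard_space_embedding [X [dist [f [dist_metric dist_sep f_inj mball]]]] mpT ergT.
have mset1 := measurable_set1 dist_metric f_inj mball.
split; first split.
- case=> B B_prop.
  have [x x_atom] := cesaro_sqrt_exists_atom mpT dist_metric f_inj mball dist_sep B_prop.
  have [s xs] := atom_exact_period mpT ergT mset1 x_atom.
  by exists s, (fun i : 'I_s => iter i T x); exact: periodic_with_atom.
- case=> r [w /periodic_with_atom_mass [x x_atom _]].
  by exists [set x]; exact: cesaro_sqrt_set1.
move=> B r w B_prop /periodic_with_atom_mass [x0 x0_atom <-].
have [mB /(pr_gt0 mB) B_gt0 _] := B_prop.
have [x Bx x_atom] := exists_atom_in mpT ergT mset1 mB B_gt0 x0_atom.
rewrite prE // (cesaro_sqrt_atom mpT ergT mset1 B_prop Bx x_atom).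
by rewrite (pr_atom_eq mpT ergT mset1 x_atom x0_atom).
Qed.
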